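(* Let $\mathcal{A}_1,\dots,\mathcal{A}_N$ be finite nonempty strategy sets, $\mathcal{A}=\prod_q\mathcal{A}_q$, fix a player $p$ and $\mathcal{A}_{-p}=\prod_{q\ne p}\mathcal{A}_q$. Consider the linear maps on payoffs $G\in\mathbb{R}^{\mathcal{A}}$: $T^{\mathrm{WSCE}}_p:\mathbb{R}^{\mathcal{A}}\to\mathbb{R}^{\mathcal{A}_p\times\mathcal{A}_p\times\mathcal{A}_{-p}}$, $(T^{\mathrm{WSCE}}_pG)(a'_p,a''_p,a_{-p})=G(a'_p,a_{-p})-G(a''_p,a_{-p})$; $T^{\mathrm{CE}}_p:\mathbb{R}^{\mathcal{A}}\to\mathbb{R}^{\mathcal{A}_p\times\mathcal{A}_p\times\mathcal{A}}$, $(T^{\mathrm{CE}}_pG)(a'_p,a''_p,a)=G(a'_p,a_{-p})-G(a''_p,a_{-p})$ if $a_p=a''_p$ and $0$ otherwise; $T^{\mathrm{CCE}}_p:\mathbb{R}^{\mathcal{A}}\to\mathbb{R}^{\mathcal{A}_p\times\mathcal{A}}$, $(T^{\mathrm{CCE}}_pG)(a'_p,a)=G(a'_p,a_{-p})-G(a)$. Then each of $T^{\mathrm{WSCE}}_p$, $T^{\mathrm{CE}}_p$ and $T^{\mathrm{CCE}}_p$ has rank $|\mathcal{A}|-|\mathcal{A}_{-p}|$.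
   Context: Joint strategies are written $a=(a_p,a_{-p})$ with $a_p\in\mathcal{A}_p$ and $a_{-p}\in\mathcal{A}_{-p}$. *)

From HB Require Import structures.
From mathcomp Require Import all_boot all_order all_algebra.
From mathcomp Require Import reals.
Set Implicit Arguments. Unset Strict Implicit. Unset Printing Implicit Defensive.
Import Order.TTheory GRing.Theory Num.Theory.
Local Open Scope ring_scope.

Section Game.
Variables (N : nat) (A : 'I_N -> finType).

Definition Joint := {dffun forall q : 'I_N, A q}.

Definition Others (p : 'I_N) := {dffun forall q : {q : 'I_N | q != p}, A (sval q)}.

Definition rest (p : 'I_N) (a : Joint) : Others p := [ffun q => a (sval q)].

Definition join (p : 'I_N) (x : A p) (y : Others p) : Joint :=
  [ffun q : 'I_N => match q =P p return A q with
                    | ReflectT e => eq_rect_r A x e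
                    | ReflectF ne => y (exist _ q (introN eqP ne))
                    end].

Variables (R : realType) (p : 'I_N).

Definition T_WSCE (G : {ffun Joint -> R}) : {ffun A p * A p * Others p -> R} :=
  [ffun t => G (join t.1.1 t.2) - G (join t.1.2 t.2)].

Definition T_CE (G : {ffun Joint -> R}) : {ffun A p * A p * Joint -> R} :=
  [ffun t : A p * A p * Joint => if t.2 p == t.1.2
             then G (join t.1.1 (rest p t.2)) - G (join t.1.2 (rest p t.2))
             else 0].

Definition T_CCE (G : {ffun Joint -> R}) : {ffun A p * Joint -> R} :=
  [ffun t : A p * Joint => G (join t.1 (rest p t.2)) - G t.2].
End Game.

Definition lin_rank (R : fieldType) (I J : finType)
  (f : {ffun I -> R} -> {ffun J -> R}) : nat :=
  \rank (\matrix_(i < #|{:I}|, j < #|{:J}|)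
           f [ffun x => ((x == enum_val i)%:R : R)] (enum_val j)).

From HB Require Import structures.
From mathcomp Require Import all_boot all_order all_algebra.
From mathcomp Require Import reals.
Set Implicit Arguments. Unset Strict Implicit. Unset Printing Implicit Defensive.
Import GRing.Theory.
Local Open Scope ring_scope.

(* Each of the three maps is linear, and it vanishes exactly on the payoffs
   that do not depend on player p's own strategy, i.e. that are constant on
   the fibres of a |-> a_{-p}.  These fibres are nonempty because A_p is, so
   the kernel has dimension |A_{-p}|, and rank-nullity gives the rank
   |A| - |A_{-p}|. *)

Lemma sum_mul_enum_delta (R : pzSemiRingType) (T : finType)
    (c : 'I_#|{:T}| -> R) (x : T) :
  \sum_i c i * (x == enum_val i)%:R = c (enum_rank x).
Proof.
rewrite (bigD1 (enum_rank x)) //= enum_rankK eqxx mulr1 big1 ?addr0 // => i ne.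
by case: eqP => [xi|]; [rewrite xi enum_valK eqxx in ne | rewrite mulr0].
Qed.

Section StandardMatrix.
Variables (F : fieldType) (I J : finType).
Implicit Types (f : {ffun I -> F} -> {ffun J -> F}) (G H : {ffun I -> F}).

Definition ffun_linear f :=
  forall c G H, f [ffun x => c * G x + H x] = [ffun y => c * f G y + f H y].

Definition std_mx f : 'M[F]_(#|{:I}|, #|{:J}|) :=
  \matrix_(i, j) f [ffun x => ((x == enum_val i)%:R)] (enum_val j).

Lemma lin_rankE f : lin_rank f = \rank (std_mx f).
Proof. by []. Qed.

Definition ffun_of_rV (u : 'rV[F]_#|{:I}|) : {ffun I -> F} :=
  [ffun x => u 0 (enum_rank x)].

Section Linear.
Variables (f : {ffun I -> F} -> {ffun J -> F}) (f_linear : ffun_linear f).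

Lemma ffun_linear0 : f 0 = 0.
Proof.
have := f_linear (-1) 0 0; rewrite (_ : [ffun _ => _] = 0); last first.
  by apply/ffunP => x; rewrite !ffunE mulr0 addr0.
by move=> ->; apply/ffunP => y; rewrite !ffunE mulN1r addNr.
Qed.

Lemma ffun_linear_sum (T : Type) (s : seq T) (c : T -> F)
    (G : T -> {ffun I -> F}) :
  f [ffun x => \sum_(i <- s) c i * G i x]
  = [ffun y => \sum_(i <- s) c i * f (G i) y].
Proof.
elim: s => [|i s IHs].
  have -> : [ffun x => \sum_(i <- [::]) c i * G i x] = 0.
    by apply/ffunP => x; rewrite !ffunE big_nil.
  by rewrite ffun_linear0; apply/ffunP => y; rewrite !ffunE big_nil.
transitivity
  (f [ffun x => c i * G i x + [ffun x => \sum_(j <- s) c j * G j x] x]).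
  by congr f; apply/ffunP => x; rewrite !ffunE big_cons.
by rewrite f_linear IHs; apply/ffunP => y; rewrite !ffunE big_cons.
Qed.

Lemma mul_std_mx u : u *m std_mx f = \row_j f (ffun_of_rV u) (enum_val j).
Proof.
have -> : ffun_of_rV u =
    [ffun x => \sum_i u 0 i * [ffun x => ((x == enum_val i)%:R : F)] x].
  by apply/ffunP => x; rewrite !ffunE -sum_mul_enum_delta;
     apply: eq_bigr => i _; rewrite ffunE.
rewrite ffun_linear_sum; apply/rowP => j; rewrite !mxE ffunE.
by apply: eq_bigr => i _; rewrite mxE.
Qed.

Lemma mul_std_mx_eq0 u : (u *m std_mx f == 0) = (f (ffun_of_rV u) == 0).
Proof.
rewrite mul_std_mx; apply/eqP/eqP => [/rowP uM0|->].
  by apply/ffunP => y; have := uM0 (enum_rank y); rewrite !mxE enum_rankK ffunE.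
by apply/rowP => j; rewrite !mxE ffunE.
Qed.

End Linear.
End StandardMatrix.

Section Fibres.
Variables (F : fieldType) (I K : finType) (pi : I -> K) (sigma : K -> I).

Definition constant_on_fibres (G : {ffun I -> F}) :=
  forall a b, pi a = pi b -> G a = G b.

Hypothesis pi_sigma : cancel sigma pi.

Definition fibre_mx : 'M[F]_(#|{:K}|, #|{:I}|) :=
  \matrix_(k, i) (pi (enum_val i) == enum_val k)%:R.

Lemma row_free_fibre_mx : row_free fibre_mx.
Proof.
apply: inj_row_free => v /rowP v_fibre0; apply/rowP => k.
have := v_fibre0 (enum_rank (sigma (enum_val k))); rewrite !mxE.
under eq_bigr do rewrite mxE enum_rankK pi_sigma.
by rewrite sum_mul_enum_delta enum_valK.
Qed.

Lemma row_fibre_mx_constant k :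
  constant_on_fibres (ffun_of_rV (row k fibre_mx)).
Proof. by move=> a b piab; rewrite !ffunE !mxE !enum_rankK piab. Qed.

Lemma constant_on_fibres_sub_fibre_mx u :
  constant_on_fibres (ffun_of_rV u) -> (u <= fibre_mx)%MS.
Proof.
move=> u_const; apply/submxP.
exists (\row_k u 0 (enum_rank (sigma (enum_val k)))).
apply/rowP => i; rewrite !mxE.
under eq_bigr do rewrite !mxE.
rewrite (sum_mul_enum_delta (fun k => u 0 (enum_rank (sigma (enum_val k))))).
have := u_const (sigma (pi (enum_val i))) (enum_val i).
by rewrite !ffunE pi_sigma enum_valK enum_rankK => ->.
Qed.

Lemma lin_rank_fibres (J : finType) (f : {ffun I -> F} -> {ffun J -> F}) :
    ffun_linear f -> (forall G, f G = 0 <-> constant_on_fibres G) ->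
  lin_rank f = (#|{:I}| - #|{:K}|)%N.
Proof.
move=> f_linear kerf.
have ker_fibre : (kermx (std_mx f) == fibre_mx)%MS.
  apply/andP; split.
    apply/row_subP => i; apply/constant_on_fibres_sub_fibre_mx/kerf/eqP.
    by rewrite -mul_std_mx_eq0 // -sub_kermx row_sub.
  rewrite sub_kermx; apply/eqP/row_matrixP => k; rewrite row_mul row0.
  by apply/eqP; rewrite mul_std_mx_eq0 //; apply/eqP/kerf/row_fibre_mx_constant.
have := mxrank_ker (std_mx f).
rewrite (eqmx_rank ker_fibre) (eqP row_free_fibre_mx) => ->.
by rewrite lin_rankE subKn ?rank_leq_row.
Qed.

End Fibres.

Section Profiles.
Variables (N : nat) (A : 'I_N -> finType) (p : 'I_N).
Implicit Types (x : A p) (y : Others A p) (a : Joint A).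

Lemma join_at x y : join x y p = x.
Proof.
(* Only the scrutinee may be generalized: [p =P p] also occurs inside the
   [ReflectF] branch. *)
rewrite ffunE; generalize (p =P p) at 1; intros r.
by destruct r as [e|ne]; [rewrite (eq_axiomK e) | case: ne].
Qed.

Lemma join_other x y q (qp : q != p) : join x y q = y (exist _ q qp).
Proof.
rewrite ffunE; generalize (q =P p) at 1; intros r.
destruct r as [e|ne]; first by exfalso; rewrite e eqxx in qp.
by rewrite (bool_irrelevance (introN eqP ne) qp).
Qed.

Lemma rest_join x : cancel (join x) (rest p).
Proof. by move=> y; apply/ffunP => -[q qp]; rewrite ffunE join_other. Qed.

Lemma join_rest a : join (a p) (rest p a) = a.
Proof.
apply/ffunP => q; have [->|qp] := eqVneq q p; first exact: join_at.
by rewrite join_other ffunE.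
Qed.

Lemma join_rest_eq a b : rest p a = rest p b -> join (a p) (rest p b) = a.
Proof. by move<-; exact: join_rest. Qed.
End Profiles.

Section CorrelatedEquilibriumMaps.
Variables (N : nat) (A : 'I_N -> finType) (R : realType) (p : 'I_N).
Implicit Type G : {ffun Joint A -> R}.

Lemma T_WSCE_linear : ffun_linear (@T_WSCE N A R p).
Proof.
by move=> c G H; apply/ffunP => t; rewrite !ffunE mulrBr addrACA opprD.
Qed.

Lemma T_CE_linear : ffun_linear (@T_CE N A R p).
Proof.
move=> c G H; apply/ffunP => t; rewrite !ffunE.
by case: ifP; rewrite ?mulr0 ?addr0 // mulrBr addrACA opprD.
Qed.

Lemma T_CCE_linear : ffun_linear (@T_CCE N A R p).
Proof.
by move=> c G H; apply/ffunP => t; rewrite !ffunE mulrBr addrACA opprD.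
Qed.

Lemma T_WSCE_eq0 G : T_WSCE p G = 0 <-> constant_on_fibres (rest p) G.
Proof.
split=> [/ffunP T0 a b ab | G_const].
  have := T0 (a p, b p, rest p b).
  by rewrite !ffunE /= join_rest_eq // join_rest => /subr0_eq.
apply/ffunP => -[[x x'] y]; rewrite !ffunE /=.
by rewrite (G_const _ (join x' y)) ?subrr // !rest_join.
Qed.

Lemma T_CE_eq0 G : T_CE p G = 0 <-> constant_on_fibres (rest p) G.
Proof.
split=> [/ffunP T0 a b ab | G_const].
  have := T0 (a p, b p, b).
  by rewrite !ffunE /= eqxx join_rest_eq // join_rest => /subr0_eq.
apply/ffunP => -[[x x'] a]; rewrite !ffunE /=; case: ifP => // _.
by rewrite (G_const _ (join x' (rest p a))) ?subrr // !rest_join.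
Qed.

Lemma T_CCE_eq0 G : T_CCE p G = 0 <-> constant_on_fibres (rest p) G.
Proof.
split=> [/ffunP T0 a b ab | G_const].
  by have := T0 (a p, b); rewrite !ffunE /= join_rest_eq // => /subr0_eq.
apply/ffunP => -[x a]; rewrite !ffunE /=.
by rewrite (G_const _ a) ?subrr // rest_join.
Qed.

End CorrelatedEquilibriumMaps.

Theorem mainTheorem7 (N : nat) (A : 'I_N -> finType)
  (hA : forall q : 'I_N, (0 < #|{: A q}|)%N) (R : realType) (p : 'I_N) :
  [/\ lin_rank (@T_WSCE N A R p) = (#|{: Joint A}| - #|{: Others A p}|)%N,
      lin_rank (@T_CE N A R p) = (#|{: Joint A}| - #|{: Others A p}|)%N &
      lin_rank (@T_CCE N A R p) = (#|{: Joint A}| - #|{: Others A p}|)%N].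
Proof.
have [a0 _] := card_gt0P (hA p).
split; apply: (lin_rank_fibres (rest_join a0)).
- exact: T_WSCE_linear.
- exact: T_WSCE_eq0.
- exact: T_CE_linear.
- exact: T_CE_eq0.
- exact: T_CCE_linear.
- exact: T_CCE_eq0.
Qed.
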